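(* Consider the Harmonia state machine defined in the context below, with parameters a finite set $D$ of data items, an integer $N\ge 1$ (number of switches), a finite nonempty set $\mathit{Rep}$ of replicas, and a Boolean $\mathit{isReadBehind}$. Then in every state reachable from the initial state by a finite sequence of the actions listed below (with arbitrary choice of action and arguments at each step), the following invariant $\mathit{Linearizability}$ holds: for every message $m\in\mathit{messages}$ with $m.\mathit{mtype}=\mathrm{ReadResponse}$, (i) $m.\mathit{write}\succeq m.\mathit{ghost}$, and (ii) either $m.\mathit{write}=\bot$ or $m.\mathit{write}$ is an entry of $\mathit{CommittedLog}$. (Informally: Harmonia preserves linearizability of the underlying primary-backup/read-ahead or quorum/read-behind replication protocol, including across switch failovers.)
   Context: Harmonia is a replicated-storage scheme in which a network switch tracks a ''dirty set'' of objects with pending writes and routes reads of clean objects to a single replica. It is modeled as the following state machine. Writes. A write is a record $w=(\mathrm{Write}, \mathit{switchNum}, \mathit{seq}, \mathit{dataItem})$ with $\mathit{switchNum}\in\{1,\dots,N\}$, $\mathit{seq}\in\mathbb{N}_{\ge1}$, $\mathit{dataItem}\in D$. The special value $\bot$ has $\mathit{switchNum}=0,\ \mathit{seq}=0$ and no data item. Define $w_1\succeq w_2$ iff $w_1.\mathit{switchNum}>w_2.\mathit{switchNum}$, or $w_1.\mathit{switchNum}=w_2.\mathit{switchNum}$ and $w_1.\mathit{seq}\ge w_2.\mathit{seq}$; and $w_1\succ w_2$ iff $w_1.\mathit{switchNum}>w_2.\mathit{switchNum}$, or they are equal and $w_1.\mathit{seq}>w_2.\mathit{seq}$. For a finite nonempty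 set $W$ of writes (possibly including $\bot$), $\max W$ denotes an element $w\in W$ with $w\succeq w'$ for all $w'\in W$ (selected by a fixed deterministic choice function). State variables: $\mathit{messages}$ (a set of messages, initially empty); for each switch $s\in\{1,\dots,N\}$ a record $\mathit{sw}[s]$ with fields $\mathit{seq}\in\mathbb{N}$ (initially $0$), $\mathit{dirty}$ a finite partial function $D\rightharpoonup\mathbb{N}$ (initially empty domain), $\mathit{lastCommitted}$ a write or $\bot$ (initially $\bot$); $\mathit{active}\in\{1,\dots,N\}$ (initially $1$); $\mathit{log}$ a finite sequence of writes (initially empty); $\mathit{cp}:\mathit{Rep}\to\mathbb{N}$ (initially all $0$). Derived quantities: $\mathit{CommittedLog}=\mathit{log}$ if $\mathit{isReadBehind}$, and otherwise the prefix of $\mathit{log}$ of length $\min_{r\in\mathit{Rep}}\mathit{cp}[r]$. For a sequence $L$ of writes and $d\in D$, $\mathrm{MCW}(d,L)=\max(\{\bot\}\cup\{e \text{ entry of } L: e.\mathit{dataItem}=d\})$; $\mathrm{MCW}(d)=\mathrm{MCW}(d,\mathit{CommittedLog})$; $\mathrm{MCW}_{all}=\max(\{\bot\}\cup\{\text{entries of }\mathit{CommittedLog}\})$. Actions (each leaves unmentioned variables unchanged): 1. SendWrite$(s,d)$, $s\in\{1..N\}, d\in D$: enabled iff $s\le\mathit{active}$. Let $n=\mathit{sw}[s].\mathit{seq}+1$; set $\mathit{sw}[s].\mathit{seq}:=n$, set $\mathit{sw}[s].\mathit{dirty}(d):=n$ (adding or overriding), add the write $(\mathrm{Write},s,n,d)$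 to $\mathit{messages}$. 2. HandleWrite$(w)$ for a write $w\in\mathit{messages}$: enabled iff $\mathit{log}$ is empty or $w\succeq$ the last entry of $\mathit{log}$; appends $w$ to $\mathit{log}$. 3. ProcessWriteCompletion$(w)$ for $w$ an entry of $\mathit{log}$: enabled iff $\mathrm{MCW}_{all}\succeq w$. With $s=w.\mathit{switchNum}$: restrict $\mathit{sw}[s].\mathit{dirty}$ to those $d$ with $\mathit{sw}[s].\mathit{dirty}(d)>w.\mathit{seq}$, and set $\mathit{sw}[s].\mathit{lastCommitted}:=\max\{\mathit{sw}[s].\mathit{lastCommitted},w\}$. 4. CommitWrite$(r)$, $r\in\mathit{Rep}$: enabled iff $|\mathit{log}|>\mathit{cp}[r]$; sets $\mathit{cp}[r]:=\mathit{cp}[r]+1$. 5. SendRead$(s,d)$: let $\mathit{lr}=\max(\{\mathrm{MCW}(d)\}\cup\{m.\mathit{write}: m\in\mathit{messages},\ m.\mathit{mtype}=\mathrm{ReadResponse},\ m.\mathit{write}\ne\bot,\ m.\mathit{write}.\mathit{dataItem}=d\})$. If $d\notin\mathrm{dom}(\mathit{sw}[s].\mathit{dirty})$ and $\mathit{sw}[s].\mathit{lastCommitted}\succ\bot$, add message $(\mathrm{HarmoniaRead}, \mathit{dataItem}=d, \mathit{switchNum}=s, \mathit{lastCommitted}=\mathit{sw}[s].\mathit{lastCommitted}, \mathit{ghost}=\mathit{lr})$; otherwise add $(\mathrm{ProtocolRead},\mathit{dataItem}=d,\mathit{ghost}=\mathit{lr})$. 6. HandleProtocolRead$(m)$ for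 a ProtocolRead $m\in\mathit{messages}$: add $(\mathrm{ReadResponse}, \mathit{write}=\mathrm{MCW}(m.\mathit{dataItem}), \mathit{ghost}=m.\mathit{ghost})$. 7. HandleHarmoniaRead$(r,m)$ for $r\in\mathit{Rep}$ and a HarmoniaRead $m\in\mathit{messages}$: let $c=\mathit{cp}[r]$ and $w=\mathrm{MCW}(m.\mathit{dataItem}, \text{first } c \text{ entries of } \mathit{log})$. Enabled iff $m.\mathit{switchNum}=\mathit{active}$ and: if $\mathit{isReadBehind}$, then $(\mathit{log}[c]$ if $c>0$, else $\bot)\succeq m.\mathit{lastCommitted}$; if not $\mathit{isReadBehind}$ (read-ahead), then $m.\mathit{lastCommitted}\succeq w$. Adds $(\mathrm{ReadResponse},\mathit{write}=w,\mathit{ghost}=m.\mathit{ghost})$. 8. SwitchFailover: enabled iff $\mathit{active}<N$; sets $\mathit{active}:=\mathit{active}+1$. *)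

From mathcomp Require Import all_boot.
From Stdlib Require List.
Set Implicit Arguments. Unset Strict Implicit. Unset Printing Implicit Defensive.

Section Harmonia.
Variable D : finType.
Variable Rep : finType.
Variable r0 : Rep.         (* witness that Rep is nonempty *)
Variable N : nat.
Variable isReadBehind : bool.

(* A write is Some (switchNum, seq, dataItem); bot is None
   (switchNum 0, seq 0, no data item). *)
Definition write := option (nat * nat * D).
Definition bot : write := None.
Definition switchNum (w : write) : nat := if w is Some (s, _, _) then s else 0.
Definition wseq (w : write) : nat := if w is Some (_, n, _) then n else 0.
Definition dataItem (w : write) : option D := if w is Some (_, _, d) then Some d else None.

Definition wge (w1 w2 : write) : bool :=
  (switchNum w2 < switchNum w1) || ((switchNum w1 == switchNum w2) && (wseq w2 <= wseq w1)).
Definition wgt (w1 w2 : write) : bool :=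
  (switchNum w2 < switchNum w1) || ((switchNum w1 == switchNum w2) && (wseq w2 < wseq w1)).

(* The fixed deterministic choice function "max" on finite sets of writes
   (finite sets represented by sequences; the result only depends on the
   set of members). *)
Definition is_max_choice (mx : seq write -> write) : Prop :=
  [/\ forall s, s != [::] -> mx s \in s,
      forall s w, w \in s -> wge (mx s) w
    & forall s1 s2, s1 =i s2 -> mx s1 = mx s2].

Variable mx : seq write -> write.

Inductive msg :=
| MWrite of write
| ReadResponse of write & write                     (* write, ghost *)
| HarmoniaRead of D & nat & write & write           (* dataItem, switchNum, lastCommitted, ghost *)
| ProtocolRead of D & write.                        (* dataItem, ghost *)

Record swrec := SwRec {
  sw_seq : nat;
  sw_dirty : D -> option nat;   (* finite partial function D -> nat *)
  sw_lastCommitted : write }.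

Record state := State {
  messages : seq msg;            (* set of messages (duplicates irrelevant) *)
  sw : nat -> swrec;             (* only switches 1..N are meaningful *)
  active : nat;
  log : seq write;
  cp : Rep -> nat }.

Definition init_state : state :=
  State [::] (fun _ => SwRec 0 (fun _ => None) bot) 1 [::] (fun _ => 0).

Definition inMsgs (m : msg) (st : state) : Prop := List.In m (messages st).

Definition minCp (st : state) : nat := cp st [arg min_(r < r0) cp st r].

Definition CommittedLog (st : state) : seq write :=
  if isReadBehind then log st else take (minCp st) (log st).

Definition MCWL (d : D) (L : seq write) : write :=
  mx (bot :: [seq e <- L | dataItem e == Some d]).
Definition MCW (st : state) (d : D) : write := MCWL d (CommittedLog st).
Definition MCW_all (st : state) : write := mx (bot :: CommittedLog st).

Definition upd_sw (f : nat -> swrec) (s : nat) (r : swrec) : nat -> swrec :=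
  fun t => if t == s then r else f t.

Definition add_msg (st : state) (m : msg) : state :=
  State (m :: messages st) (sw st) (active st) (log st) (cp st).

Definition rr_writes (st : state) (d : D) : seq write :=
  pmap (fun m => match m with
                 | ReadResponse w _ => if (w != bot) && (dataItem w == Some d)
                                       then Some w else None
                 | _ => None end) (messages st).

Inductive step : state -> state -> Prop :=
| SendWrite st s d :
    1 <= s -> s <= N -> s <= active st ->
    let n := (sw_seq (sw st s)).+1 in
    let r := SwRec n (fun d' => if d' == d then Some n else sw_dirty (sw st s) d')
                   (sw_lastCommitted (sw st s)) in
    step st (State (MWrite (Some (s, n, d)) :: messages st) (upd_sw (sw st) s r)
                   (active st) (log st) (cp st))
| HandleWrite st w :
    inMsgs (MWrite w) st ->
    (log st = [::] \/ wge w (last bot (log st))) ->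
    step st (State (messages st) (sw st) (active st) (rcons (log st) w) (cp st))
| ProcessWriteCompletion st w :
    w \in log st ->
    wge (MCW_all st) w ->
    let s := switchNum w in
    let r := SwRec (sw_seq (sw st s))
                   (fun d => match sw_dirty (sw st s) d with
                             | Some k => if wseq w < k then Some k else None
                             | None => None end)
                   (mx [:: sw_lastCommitted (sw st s); w]) in
    step st (State (messages st) (upd_sw (sw st) s r) (active st) (log st) (cp st))
| CommitWrite st r :
    cp st r < size (log st) ->
    step st (State (messages st) (sw st) (active st) (log st)
                   (fun r' => if r' == r then (cp st r).+1 else cp st r'))
| SendRead st s d :
    1 <= s -> s <= N ->
    let lr := mx (MCW st d :: rr_writes st d) in
    let lc := sw_lastCommitted (sw st s) in
    step st (add_msg st
               (if (sw_dirty (sw st s) d == None) && wgt lc bot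
                then HarmoniaRead d s lc lr
                else ProtocolRead d lr))
| HandleProtocolRead st d g :
    inMsgs (ProtocolRead d g) st ->
    step st (add_msg st (ReadResponse (MCW st d) g))
| HandleHarmoniaRead st r d s lc g :
    inMsgs (HarmoniaRead d s lc g) st ->
    let c := cp st r in
    let w := MCWL d (take c (log st)) in
    s = active st ->
    (if isReadBehind
     then wge (if 0 < c then nth bot (log st) c.-1 else bot) lc
     else wge lc w) ->
    step st (add_msg st (ReadResponse w g))
| SwitchFailover st :
    active st < N ->
    step st (State (messages st) (sw st) (active st).+1 (log st) (cp st)).

Inductive reachable : state -> Prop :=
| reach_init : reachable init_state
| reach_step st st' : reachable st -> step st st' -> reachable st'.

Definition Linearizability (st : state) : Prop :=
  forall w g, inMsgs (ReadResponse w g) st ->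
    wge w g /\ (w = bot \/ w \in CommittedLog st).

End Harmonia.

(* The proof is by an inductive invariant [Inv] of reachable states.  Besides
   the linearizability of every read response, [Inv] records why it is
   preserved:
   - the log is sorted for the write order and no two of its entries are
     equivalent (sent writes are uniquely identified by switch and sequence
     number), so every prefix of the log is downward closed;
   - the committed log only grows, so the obligations of in-flight messages
     persist ([msgOK_grows]);
   - a switch's lastCommitted write is committed, and a write of that switch
     on an item no longer in its dirty set is below it; since writes of older
     switches are below by switch number, a Harmonia read of a clean item at
     the active switch carries a lastCommitted above every committed write on
     that item ([clean_lastCommitted_ge]).  This is what makes single-replica
     reads safe, in both read-behind and read-ahead mode. *)
From Pilot Require Import Defs.
From mathcomp Require Import all_boot zify.
Set Implicit Arguments. Unset Strict Implicit. Unset Printing Implicit Defensive.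

Local Notation bot := (@Defs.bot _).

Section WriteOrder.
Variable D : finType.
Implicit Types (a b c w : write D) (L : seq (write D)).

Lemma wge_refl a : wge a a.
Proof. by rewrite /wge eqxx leqnn orbT. Qed.

Lemma wge_bot a : wge a bot.
Proof. by rewrite /wge /=; case: (switchNum a). Qed.

Lemma wge_trans a b c : wge a b -> wge b c -> wge a c.
Proof.
by rewrite /wge => /orP [?|/andP [/eqP ? ?]] /orP [?|/andP [/eqP ? ?]]; apply/orP; lia.
Qed.

Lemma wge_antisym a b : wge a b -> wge b a ->
  switchNum a = switchNum b /\ wseq a = wseq b.
Proof. by rewrite /wge => /orP [?|/andP [/eqP ? ?]] /orP [?|/andP [/eqP ? ?]]; lia. Qed.

Lemma wge_same_switch a c : switchNum a = switchNum c -> wge a c -> wseq c <= wseq a.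
Proof. by rewrite /wge => E /orP [?|/andP [_ ?]]; lia. Qed.

Lemma wge_bot_switch0 a : wge bot a -> switchNum a = 0.
Proof. by case: a => [[[[|s] n] d]|]. Qed.

Lemma wgt_bot_neq a : wgt a bot -> a <> bot.
Proof. by move=> + E; rewrite E. Qed.

Lemma wgt_bot_wge a : wgt a bot -> ~~ wge bot a.
Proof. by case: a => [[[[|s] n] d]|] //=; rewrite /wgt /wge /=; lia. Qed.

Definition wsorted L : bool := pairwise (fun a b => wge b a) L.
Definition key_unique L : Prop :=
  forall a c, a \in L -> c \in L -> wge a c -> wge c a -> a = c.

Lemma wsorted_last y L x : wsorted L -> x \in L -> wge (last y L) x.
Proof.
elim: L y => [//|a L IH] y /=; rewrite in_cons => /andP [Ha HL] /orP [/eqP ->|Hx].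
- have := mem_last a L; rewrite in_cons => /orP [/eqP ->|H]; first exact: wge_refl.
  exact: (allP Ha).
- exact: IH.
Qed.

Lemma prefix_down_closed L k x y : wsorted L -> key_unique L ->
  x \in take k L -> y \in L -> wge x y -> y \in take k L.
Proof.
move=> HL HU Hx Hy Hxy.
move: HL Hy; rewrite -{1 2}(cat_take_drop k L) /wsorted pairwise_cat mem_cat.
case/and3P => /allrelP Hpre _ _ /orP [//|Hyd].
by rewrite -(HU _ _ (mem_take Hx) (mem_drop Hyd) Hxy (Hpre _ _ Hx Hyd)).
Qed.

Lemma mem_take_extend L e k k' w : k <= k' -> w \in take k L -> w \in take k' (L ++ e).
Proof.
move=> Hk Hw.
have Hw' : w \in take k (L ++ e).
  rewrite take_cat; case: ltnP => // Hsz.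
  by rewrite mem_cat -(take_oversize Hsz) Hw.
by move: Hw'; rewrite -(take_takel _ Hk); apply: mem_take.
Qed.

End WriteOrder.

Section MaxChoice.
Variables (D : finType) (mx : seq (write D) -> write D).
Hypothesis Hmx : is_max_choice mx.

Lemma mx_mem L : mx (bot :: L) \in bot :: L.
Proof. by case: Hmx => H _ _; apply: H. Qed.

Lemma mx_ge L w : w \in L -> wge (mx L) w.
Proof. by case: Hmx => _ H _; apply: H. Qed.

Lemma mx_pair a c : mx [:: a; c] = a \/ mx [:: a; c] = c.
Proof. by case: Hmx => H _ _; move: (H [:: a; c] isT); rewrite !inE => /orP [] /eqP; tauto. Qed.

Lemma MCWL_spec d L :
  MCWL mx d L = bot \/ (MCWL mx d L \in L /\ dataItem (MCWL mx d L) = Some d).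
Proof.
have := mx_mem [seq e <- L | dataItem e == Some d].
rewrite /MCWL in_cons mem_filter => /orP [/eqP ->|/andP [/eqP Hd HL]]; by [left|right].
Qed.

Lemma MCWL_ge d L w : w \in L -> dataItem w = Some d -> wge (MCWL mx d L) w.
Proof. by move=> HL Hd; apply: mx_ge; rewrite in_cons mem_filter HL Hd eqxx orbT. Qed.

End MaxChoice.

Section Invariant.
Variables (D Rep : finType) (r0 : Rep) (b : bool).
Implicit Types (st : state D Rep) (w g : write D).
Local Notation CL := (CommittedLog r0 b).

Lemma minCp_le st r : minCp r0 st <= cp st r.
Proof. by rewrite /minCp; case: arg_minnP => // i _; apply. Qed.

(* [grows st st'] : the log of st' extends that of st and no commit point
   decreases.  Every action is such a transition. *)
Definition grows st st' : Prop :=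
  (exists e, log st' = log st ++ e) /\ (forall r, cp st r <= cp st' r).

Lemma grows_same st st' : log st' = log st -> cp st' = cp st -> grows st st'.
Proof. by rewrite /grows => -> ->; split=> //; exists [::]; rewrite cats0. Qed.

Lemma CL_same st st' : log st' = log st -> cp st' = cp st -> CL st' = CL st.
Proof. by rewrite /CommittedLog /minCp => -> ->. Qed.

Lemma CL_grows st st' w : grows st st' -> w \in CL st -> w \in CL st'.
Proof.
rewrite /CommittedLog => -[[e ->] Hcp]; case: b; first by rewrite mem_cat => ->.
apply: mem_take_extend.
exact: leq_trans (minCp_le st [arg min_(r < r0) cp st' r]) (Hcp _).
Qed.

Lemma CL_sub st w : w \in CL st -> w \in log st.
Proof. by rewrite /CommittedLog; case: b => //; apply: mem_take. Qed.

Definition ghostOK st d g : Prop := g = bot \/ (g \in CL st /\ dataItem g = Some d).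

Definition msgOK st (m : msg D) : Prop :=
  match m with
  | MWrite _ => True
  | ReadResponse w g => wge w g /\ (w = bot \/ w \in CL st)
  | ProtocolRead d g => ghostOK st d g
  | HarmoniaRead d s lc g =>
      [/\ wgt lc bot, lc \in CL st, ghostOK st d g & active st <= s -> wge lc g]
  end.

Lemma ghostOK_grows st st' d g : grows st st' -> ghostOK st d g -> ghostOK st' d g.
Proof. by move=> Hg [->|[H1 H2]]; [left|right; split=> //; apply: CL_grows Hg H1]. Qed.

Lemma msgOK_grows st st' m :
  grows st st' -> active st <= active st' -> msgOK st m -> msgOK st' m.
Proof.
move=> Hg Ha; case: m => //=.
- by move=> w g [Hwg [Hw|Hw]]; split=> //; [left|right; apply: CL_grows Hg Hw].
- move=> d s lc g [? Hlc Hgh Hact]; split=> //.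
  + exact: CL_grows Hg Hlc.
  + exact: ghostOK_grows Hg Hgh.
  + by move=> Hs; apply: Hact; apply: leq_trans Ha Hs.
- by move=> d g; apply: ghostOK_grows.
Qed.

Record Inv st : Prop := {
  log_sent : forall w, w \in log st -> inMsgs (MWrite w) st;
  write_wf : forall w, inMsgs (MWrite w) st -> exists s n d,
      [/\ w = Some (s, n, d), 0 < s, s <= active st & n <= sw_seq (sw st s)];
  write_key_unique : forall s n d d', inMsgs (MWrite (Some (s, n, d))) st ->
      inMsgs (MWrite (Some (s, n, d'))) st -> d = d';
  dirty_covers : forall s n d, inMsgs (MWrite (Some (s, n, d))) st ->
      if sw_dirty (sw st s) d is Some k then n <= k
      else n <= wseq (sw_lastCommitted (sw st s));
  lastCommitted_ok : forall s, sw_lastCommitted (sw st s) = bot \/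
      (switchNum (sw_lastCommitted (sw st s)) = s /\
       sw_lastCommitted (sw st s) \in CL st);
  log_sorted : wsorted (log st);
  cp_bounded : forall r, cp st r <= size (log st);
  msgs_ok : forall m, inMsgs m st -> msgOK st m }.

Lemma Inv_init : Inv (init_state D Rep).
Proof. by split=> //= s; left. Qed.

Section Facts.
Variable st : state D Rep.
Hypothesis I : Inv st.

(* Log entries are sent writes, which are identified by their key. *)
Lemma log_key_unique : key_unique (log st).
Proof.
move=> a c Ha Hc.
have [s [n [d [Ea _ _ _]]]] := write_wf I (log_sent I Ha).
have [s' [n' [d' [Ec _ _ _]]]] := write_wf I (log_sent I Hc).
subst a c => /wge_antisym H /H /= [Es En]; subst s' n'.
by rewrite (write_key_unique I (log_sent I Ha) (log_sent I Hc)).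
Qed.

Lemma log_switch_pos w : w \in log st -> 0 < switchNum w.
Proof. by move=> Hw; have [s [n [d [-> ? _ _]]]] := write_wf I (log_sent I Hw). Qed.

Lemma log_prefix_closed k x y :
  x \in take k (log st) -> y \in log st -> wge x y -> y \in take k (log st).
Proof. exact: prefix_down_closed (log_sorted I) log_key_unique. Qed.

Lemma Inv_add_msg m : msgOK st m -> (forall w, m <> MWrite w) -> Inv (add_msg st m).
Proof.
move=> Hm Hnw.
have Hg : grows st (add_msg st m) by apply: grows_same.
split; rewrite /inMsgs /=.
- by move=> w Hw; right; exact: (log_sent I Hw).
- by move=> w [E|H]; [case: (Hnw w)|exact: (write_wf I H)].
- move=> s n d d' [E|H] [E'|H']; try by case: (Hnw _ E) || case: (Hnw _ E').
  exact: (write_key_unique I H H').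
- by move=> s n d [E|H]; [case: (Hnw _ E)|exact: (dirty_covers I H)].
- by move=> s; rewrite (CL_same (st := st)) //; exact: (lastCommitted_ok I).
- exact: (log_sorted I).
- exact: (cp_bounded I).
- move=> m' [<-|H]; apply: msgOK_grows Hg (leqnn _) _ => //.
  exact: (msgs_ok I H).
Qed.

End Facts.
End Invariant.

Section Preservation.
Variables (D Rep : finType) (r0 : Rep) (b : bool) (mx : seq (write D) -> write D).
Hypothesis Hmx : is_max_choice mx.
Implicit Types (st : state D Rep) (w g : write D).
Local Notation CL := (CommittedLog r0 b).
Local Notation Inv := (Inv r0 b).

(* SendWrite: the new write gets a fresh sequence number of its switch and is
   recorded as dirty, so all write bookkeeping is kept. *)
Lemma Inv_SendWrite st s d : Inv st -> 0 < s -> s <= active st ->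
  let n := (sw_seq (sw st s)).+1 in
  let r := SwRec n (fun d' => if d' == d then Some n else sw_dirty (sw st s) d')
                 (sw_lastCommitted (sw st s)) in
  Inv (State (MWrite (Some (s, n, d)) :: messages st) (upd_sw (sw st) s r)
             (active st) (log st) (cp st)).
Proof.
move=> I Hs Hact n r; set st' := State _ _ _ _ _.
have Hg : grows st st' by apply: grows_same.
have HCL : CL st' = CL st by apply: CL_same.
have Hfresh : forall n' d', inMsgs (MWrite (Some (s, n', d'))) st -> n' < n.
  move=> n' d' Hw; have [s1 [n1 [d1 [[<- <- _] _ _ Hn]]]] := write_wf I Hw.
  by rewrite /n ltnS.
split; rewrite /inMsgs /=.
- by move=> w Hw; right; exact: (log_sent I Hw).
- move=> w [[<-]|Hw]; first by exists s, n, d; rewrite /upd_sw eqxx.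
  have [s1 [n1 [d1 [Ew Hpos Hs1 Hseq]]]] := write_wf I Hw.
  exists s1, n1, d1; split=> //; rewrite /upd_sw; case: eqP => [Es|_] //=.
  by subst s1; apply: leq_trans Hseq (leqnSn _).
- move=> s1 n1 d1 d2 [[Es En Ed]|H1] [[Es' En' Ed']|H2].
  + by rewrite -Ed -Ed'.
  + by subst; have := Hfresh _ _ H2; rewrite ltnn.
  + by subst; have := Hfresh _ _ H1; rewrite ltnn.
  + exact: (write_key_unique I H1 H2).
- move=> s1 n1 d1 [[<- <- <-]|H]; first by rewrite /upd_sw eqxx /r /= eqxx.
  have Hd := dirty_covers I H; rewrite /upd_sw; case: eqP => [Es|_] //=.
  subst s1; case: eqP => [Ed|_] //; subst d1.
  exact: ltnW (Hfresh _ _ H).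
- by move=> s1; rewrite HCL /upd_sw; case: eqP => [->|_]; exact: (lastCommitted_ok I).
- exact: (log_sorted I).
- exact: (cp_bounded I).
- move=> m [<-|H] //; exact: msgOK_grows Hg (leqnn _) (msgs_ok I H).
Qed.

(* HandleWrite: appending a write that is above the last log entry keeps the
   log sorted. *)
Lemma Inv_HandleWrite st w : Inv st -> inMsgs (MWrite w) st ->
  (log st = [::] \/ wge w (last bot (log st))) ->
  Inv (State (messages st) (sw st) (active st) (rcons (log st) w) (cp st)).
Proof.
move=> I Hw Hlast; set st' := State _ _ _ _ _.
have Hg : grows st st' by split=> //=; exists [:: w]; rewrite cats1.
split=> /=.
- by move=> w'; rewrite mem_rcons in_cons => /orP [/eqP ->|H]; [|exact: (log_sent I H)].
- exact: (write_wf I).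
- exact: (write_key_unique I).
- exact: (dirty_covers I).
- move=> s; case: (lastCommitted_ok I s) => [->|[Hsw Hlc]]; [by left|right].
  by split=> //; exact: CL_grows Hg Hlc.
- rewrite /wsorted pairwise_rcons -/(wsorted _) (log_sorted I) andbT.
  apply/allP => x Hx.
  case: Hlast => [E|Hl]; first by rewrite E in Hx.
  exact: wge_trans Hl (wsorted_last _ (log_sorted I) Hx).
- by move=> r; rewrite size_rcons; apply: leq_trans (cp_bounded I r) (leqnSn _).
- by move=> m H; exact: msgOK_grows Hg (leqnn _) (msgs_ok I H).
Qed.

Lemma completed_write_committed st w : Inv st ->
  w \in log st -> wge (MCW_all r0 b mx st) w -> w \in CL st.
Proof.
move=> I Hw Hge; have Hs0 := log_switch_pos I Hw.
have := mx_mem Hmx (CL st); rewrite in_cons => /orP [/eqP E|Hx].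
  by move: Hge; rewrite /MCW_all E => /wge_bot_switch0 E0; rewrite E0 in Hs0.
move: Hge Hx; rewrite /MCW_all /CommittedLog; case: b => // Hge Hx.
exact: (log_prefix_closed I Hx Hw Hge).
Qed.

Lemma new_lastCommitted_ok st w : Inv st -> w \in CL st ->
  let s := switchNum w in
  let lc := sw_lastCommitted (sw st s) in
  [/\ switchNum (mx [:: lc; w]) = s, mx [:: lc; w] \in CL st,
      wseq w <= wseq (mx [:: lc; w]) & wseq lc <= wseq (mx [:: lc; w])].
Proof.
move=> I Hwc s lc.
have Hs0 : 0 < s := log_switch_pos I (CL_sub Hwc).
have Hw : wge (mx [:: lc; w]) w by apply: (mx_ge Hmx); rewrite !inE eqxx orbT.
have Hlc : wge (mx [:: lc; w]) lc by apply: (mx_ge Hmx); rewrite !inE eqxx.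
have Hsw : switchNum (mx [:: lc; w]) = s /\ mx [:: lc; w] \in CL st.
  case: (mx_pair Hmx lc w) => E; rewrite E //; rewrite E in Hw.
  case: (lastCommitted_ok I s) => [E0|//].
  by move: Hw; rewrite /lc E0 => /wge_bot_switch0 E1; rewrite /s E1 in Hs0.
case: Hsw => Hsw HCL; split=> //; first exact: wge_same_switch Hsw Hw.
case: (lastCommitted_ok I s) => [E0|[Hlcs _]]; first by rewrite /lc E0.
by apply: wge_same_switch Hlc; rewrite Hsw Hlcs.
Qed.

(* ProcessWriteCompletion: the writes of s cleaned from the dirty set are
   covered by the new lastCommitted write. *)
Lemma Inv_ProcessWriteCompletion st w : Inv st ->
  w \in log st -> wge (MCW_all r0 b mx st) w ->
  let s := switchNum w in
  let r := SwRec (sw_seq (sw st s))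
                 (fun d => match sw_dirty (sw st s) d with
                           | Some k => if wseq w < k then Some k else None
                           | None => None end)
                 (mx [:: sw_lastCommitted (sw st s); w]) in
  Inv (State (messages st) (upd_sw (sw st) s r) (active st) (log st) (cp st)).
Proof.
move=> I Hw Hge s r; set st' := State _ _ _ _ _.
have HCL : CL st' = CL st by apply: CL_same.
have [Hsw Hcommitted Hseqw Hseqlc] := new_lastCommitted_ok I (completed_write_committed I Hw Hge).
split=> /=.
- exact: (log_sent I).
- move=> w' H; have [s1 [n1 [d1 [Ew Hpos Hact Hseq]]]] := write_wf I H.
  by exists s1, n1, d1; split=> //; rewrite /upd_sw; case: eqP => [Es|_] //; rewrite /r -Es.
- exact: (write_key_unique I).
- move=> s1 n1 d1 H; have := dirty_covers I H.
  rewrite /upd_sw; case: eqP => [Es|_] //; subst s1; rewrite /r /=.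
  case: (sw_dirty (sw st s) d1) => [k|] Hk; last exact: leq_trans Hk Hseqlc.
  case: ltnP => Hwk //; exact: leq_trans Hk (leq_trans Hwk Hseqw).
- move=> s1; rewrite HCL /upd_sw; case: eqP => [Es|_]; last exact: (lastCommitted_ok I).
  by right; rewrite /r /= Hsw Es.
- exact: (log_sorted I).
- exact: (cp_bounded I).
- by move=> m H; exact: msgOK_grows (grows_same _ _) (leqnn _) (msgs_ok I H).
Qed.

Lemma Inv_CommitWrite st r : Inv st -> cp st r < size (log st) ->
  Inv (State (messages st) (sw st) (active st) (log st)
             (fun r' => if r' == r then (cp st r).+1 else cp st r')).
Proof.
move=> I Hr; set st' := State _ _ _ _ _.
have Hg : grows st st'.
  split; first by exists [::]; rewrite cats0.
  by move=> r' /=; case: eqP => [->|_].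
split=> /=.
- exact: (log_sent I).
- exact: (write_wf I).
- exact: (write_key_unique I).
- exact: (dirty_covers I).
- move=> s; case: (lastCommitted_ok I s) => [->|[Hsw Hlc]]; [by left|right].
  by split=> //; exact: CL_grows Hg Hlc.
- exact: (log_sorted I).
- by move=> r'; case: eqP => _; [exact: Hr|exact: (cp_bounded I)].
- by move=> m H; exact: msgOK_grows Hg (leqnn _) (msgs_ok I H).
Qed.

Lemma rr_writes_spec st d x : x \in rr_writes st d ->
  exists g, [/\ inMsgs (ReadResponse x g) st, x <> bot & dataItem x = Some d].
Proof.
rewrite /rr_writes /inMsgs; set F := (X in pmap X).
elim: (messages st) => [//|m ms IH] /=.
have Hrest : x \in pmap F ms -> exists g,
    [/\ List.In (ReadResponse x g) (m :: ms), x <> bot & dataItem x = Some d].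
  by move=> /IH [g [H1 H2 H3]]; exists g; split=> //; right.
case: m Hrest => [w|w g|d1 s lc g|d1 g] Hrest //=.
case: ifP => [/andP [Hb /eqP Hd]|_] //=; rewrite in_cons => /orP [/eqP ->|]; last exact: Hrest.
by exists g; split=> //; [left|apply/eqP].
Qed.

Lemma read_ghost_ok st d : Inv st ->
  ghostOK r0 b st d (mx (MCW r0 b mx st d :: rr_writes st d)).
Proof.
move=> I; case: Hmx => Hmem _ _.
move: (Hmem (MCW r0 b mx st d :: rr_writes st d) isT); rewrite in_cons.
case/orP => [/eqP ->|/rr_writes_spec [g [Hin Hnb Hd]]].
  by rewrite /MCW; case: (MCWL_spec Hmx d (CL st)) => [->|]; [left|right].
by rewrite /ghostOK; case: (msgs_ok I Hin) => _ [//|Hc]; right.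
Qed.

(* Writes of earlier
   switches are smaller by switch number, those of s by sequence number. *)
Lemma clean_lastCommitted_ge st s d g : Inv st ->
  sw_dirty (sw st s) d = None -> switchNum (sw_lastCommitted (sw st s)) = s ->
  active st <= s -> g \in CL st -> dataItem g = Some d ->
  wge (sw_lastCommitted (sw st s)) g.
Proof.
move=> I Hclean Hsw Has Hg Hd.
have Hmsg := log_sent I (CL_sub Hg).
have [s1 [n1 [d1 [Eg _ Hs1 _]]]] := write_wf I Hmsg.
subst g; case: Hd => Ed; subst d1.
rewrite /wge Hsw /=.
have : s1 <= s by exact: leq_trans Hs1 Has.
rewrite leq_eqVlt => /orP [/eqP Es|->] //; subst s1.
by rewrite ltnn eqxx /=; move: (dirty_covers I Hmsg); rewrite Hclean.
Qed.

(* SendRead: the ghost is justified, and a Harmonia read is only issued for a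
   clean item with a non-bot lastCommitted. *)
Lemma Inv_SendRead st s d : Inv st ->
  let lr := mx (MCW r0 b mx st d :: rr_writes st d) in
  let lc := sw_lastCommitted (sw st s) in
  Inv (add_msg st (if (sw_dirty (sw st s) d == None) && wgt lc bot
                   then HarmoniaRead d s lc lr else ProtocolRead d lr)).
Proof.
move=> I lr lc; have Hgh : ghostOK r0 b st d lr := read_ghost_ok d I.
apply: (Inv_add_msg I); last by move=> w; case: ifP.
case: ifP => [/andP [/eqP Hclean Hnb]|_] //=.
have [Elc|[Hsw Hlc]] := lastCommitted_ok I s; first by case: (wgt_bot_neq Hnb Elc).
split=> // Has; case: Hgh => [->|[Hg Hd]]; first exact: wge_bot.
exact: clean_lastCommitted_ge I Hclean Hsw Has Hg Hd.
Qed.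

(* HandleProtocolRead: the most recent committed write on d is above every
   committed ghost on d. *)
Lemma Inv_HandleProtocolRead st d g : Inv st -> inMsgs (ProtocolRead d g) st ->
  Inv (add_msg st (ReadResponse (MCW r0 b mx st d) g)).
Proof.
move=> I Hin; apply: (Inv_add_msg I) => //=; split.
- by case: (msgs_ok I Hin) => [->|[Hg Hd]]; [exact: wge_bot|exact: MCWL_ge Hd].
- by rewrite /MCW; case: (MCWL_spec Hmx d (CL st)) => [->|[Hc _]]; [left|right].
Qed.

(* HandleHarmoniaRead, read-behind mode: the replica's prefix ends above lc,
   hence above the ghost, so by downward closure it contains the ghost. *)
Lemma harmonia_read_behind st r d lc g : Inv st -> b = true ->
  wgt lc bot -> ghostOK r0 b st d g -> wge lc g ->
  wge (if 0 < cp st r then nth bot (log st) (cp st r).-1 else bot) lc ->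
  msgOK r0 b st (ReadResponse (MCWL mx d (take (cp st r) (log st))) g).
Proof.
move=> I Hb Hnb Hgh Hlg; rewrite /= /CommittedLog Hb.
case: posnP => [_ /(negP (wgt_bot_wge Hnb))//|Hc0 Hcond].
have Hlast : nth bot (log st) (cp st r).-1 \in take (cp st r) (log st).
  have Hpred : (cp st r).-1 < cp st r by rewrite ltn_predL.
  rewrite -(nth_take bot Hpred); apply: mem_nth.
  by rewrite size_takel ?(cp_bounded I).
split.
- case: Hgh => [->|[Hg Hd]]; first exact: wge_bot.
  apply: (MCWL_ge Hmx _ Hd).
  exact: (log_prefix_closed I Hlast (CL_sub Hg) (wge_trans Hcond Hlg)).
- by case: (MCWL_spec Hmx d (take (cp st r) (log st))) => [->|[Hin _]];
    [left|right; exact: mem_take Hin].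
Qed.

(* HandleHarmoniaRead, read-ahead mode: the replica's prefix contains the
   committed prefix (hence the ghost), and its answer lies below the committed
   lc, hence is committed by downward closure. *)
Lemma harmonia_read_ahead st r d lc g : Inv st -> b = false ->
  lc \in CL st -> ghostOK r0 b st d g ->
  wge lc (MCWL mx d (take (cp st r) (log st))) ->
  msgOK r0 b st (ReadResponse (MCWL mx d (take (cp st r) (log st))) g).
Proof.
move=> I Hb; rewrite /= /ghostOK /CommittedLog Hb => Hlc Hgh Hcond; split.
- case: Hgh => [->|[Hg Hd]]; first exact: wge_bot.
  apply: (MCWL_ge Hmx _ Hd).
  by have := mem_take_extend [::] (minCp_le r0 st r) Hg; rewrite cats0.
- case: (MCWL_spec Hmx d (take (cp st r) (log st))) => [->|[Hin _]]; [by left|right].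
  exact: (log_prefix_closed I Hlc (mem_take Hin) Hcond).
Qed.

(* HandleHarmoniaRead: the read is answered only while its switch is active,
   so lc is above the ghost; the two modes are handled above. *)
Lemma Inv_HandleHarmoniaRead st r d s lc g : Inv st ->
  inMsgs (HarmoniaRead d s lc g) st -> s = active st ->
  let c := cp st r in
  let w := MCWL mx d (take c (log st)) in
  (if b then wge (if 0 < c then nth bot (log st) c.-1 else bot) lc else wge lc w) ->
  Inv (add_msg st (ReadResponse w g)).
Proof.
move=> I Hin Hs c w Hcond; apply: (Inv_add_msg I) => //.
have [Hnb Hlc Hgh Hact] := msgs_ok I Hin.
have Hlg : wge lc g by apply: Hact; rewrite Hs.
have [Hb|Hb] : b = true \/ b = false by case: b; [left|right].
all: rewrite Hb in Hcond.
- exact: (harmonia_read_behind I Hb Hnb Hgh Hlg Hcond).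
- exact: (harmonia_read_ahead I Hb Hlc Hgh Hcond).
Qed.

(* SwitchFailover: obligations only weaken as the active switch grows. *)
Lemma Inv_SwitchFailover st : Inv st ->
  Inv (State (messages st) (sw st) (active st).+1 (log st) (cp st)).
Proof.
move=> I; split=> /=.
- exact: (log_sent I).
- move=> w H; have [s [n [d [Ew Hpos Hact Hseq]]]] := write_wf I H.
  by exists s, n, d; split=> //; apply: leq_trans Hact (leqnSn _).
- exact: (write_key_unique I).
- exact: (dirty_covers I).
- exact: (lastCommitted_ok I).
- exact: (log_sorted I).
- exact: (cp_bounded I).
- move=> m H; apply: (msgOK_grows _ _ (msgs_ok I H)); [exact: grows_same|exact: leqnSn].
Qed.

Lemma Inv_step N st st' : Inv st -> step r0 N b mx st st' -> Inv st'.
Proof.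
move=> I Hs; case: Hs I => {st st'}.
- by move=> st s d Hs _ Hact n r I; exact: (Inv_SendWrite d I Hs Hact).
- by move=> st w Hw Hlast I; exact: (Inv_HandleWrite I Hw Hlast).
- by move=> st w Hw Hge s r I; exact: (Inv_ProcessWriteCompletion I Hw Hge).
- by move=> st r Hr I; exact: (Inv_CommitWrite I Hr).
- by move=> st s d _ _ lr lc I; exact: (Inv_SendRead s d I).
- by move=> st d g Hin I; exact: (Inv_HandleProtocolRead I Hin).
- by move=> st r d s lc g Hin c w Hs Hcond I; exact: (Inv_HandleHarmoniaRead I Hin Hs Hcond).
- by move=> st _ I; exact: (Inv_SwitchFailover I).
Qed.

End Preservation.

Theorem theorem1 (D Rep : finType) (r0 : Rep) (N : nat) (isReadBehind : bool)
    (mx : seq (write D) -> write D) :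
  1 <= N ->
  is_max_choice mx ->
  forall st : state D Rep,
    reachable r0 N isReadBehind mx st ->
    Linearizability r0 isReadBehind st.
Proof.
move=> _ Hmx st Hreach.
have I : Inv r0 isReadBehind st.
  elim: Hreach => [|st1 st2 _ IH Hstep]; first exact: Inv_init.
  exact: (Inv_step Hmx IH Hstep).
by move=> w g Hin; exact: (msgs_ok I Hin).
Qed.
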